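(* For every integer $k\ge 0$, $M_{2k+1} < (1.45)^{k+1}$.
   Context: Fix integers $p,q\ge1$. A labeled binary tree is a rooted, ordered, full binary tree (every internal node has exactly two children) whose internal nodes are labeled ''+'' or ''*'' and whose leaves are labeled by pairs $(i,j)\in\{1,\dots,q\}\times\{1,\dots,p\}$. $\mathcal{F}_{2k+1}$ is the set of such trees with at most $2k+1$ nodes. For a tree $f$, the integer $M_f$ is defined recursively: - $M_f=1$ if $f$ is a single leaf; - $M_f=M_{f_L}+M_{f_R}$ if the root of $f$ is ''+'', where $f_L,f_R$ are its left and right subtrees; - $M_f=M_{f_L}\cdot M_{f_R}$ if the root of $f$ is ''*''. Equivalently, $M_f$ is the length of the expansion vectors $\bm{v},\bm{u}$ with $h(\bm{x};f,\bm{w})=\langle\bm{v},\bm{u}\rangle$, obtained by concatenation at ''+'' nodes and by all pairwise products at ''*'' nodes. Finally, $M_{2k+1}=\max_{f\in\mathcal{F}_{2k+1}} M_f$. *)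

From mathcomp Require Import all_boot all_order all_algebra.
Set Implicit Arguments. Unset Strict Implicit. Unset Printing Implicit Defensive.

Inductive op := OPlus | OTimes.

(* Rooted, ordered, full binary trees; internal nodes labeled by op,
   leaves labeled by pairs (i,j) in {1..q} x {1..p} (here 0-indexed as 'I_q * 'I_p). *)
Inductive ltree (q p : nat) :=
| Leaf of 'I_q * 'I_p
| Node of op & ltree q p & ltree q p.

Fixpoint nnodes (q p : nat) (f : ltree q p) : nat :=
  match f with
  | Leaf _ => 1
  | Node _ l r => (nnodes l + nnodes r).+1
  end.

Fixpoint Mf (q p : nat) (f : ltree q p) : nat :=
  match f with
  | Leaf _ => 1
  | Node OPlus l r => Mf l + Mf r
  | Node OTimes l r => Mf l * Mf r
  end.

From mathcomp Require Import all_boot all_order all_algebra.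
From mathcomp Require Import zify lra.
Import Order.TTheory GRing.Theory Num.Theory.

Set Implicit Arguments.
Unset Strict Implicit.
Unset Printing Implicit Defensive.

(* A tree with n leaves has M_f <= Mbound n, where Mbound n = n for n <= 4 and
   Mbound (n + 3) = 3 * Mbound n (the best trees multiply blocks 1+1+1).
   Mbound is superadditive and supermultiplicative, so the bound follows by
   induction on f.  Since 1.45^3 > 3 and n < 1.45^n for n <= 4, we get
   Mbound n < 1.45^n, and a tree with at most 2k+1 nodes has at most k+1
   leaves. *)

Fixpoint Mbound (n : nat) : nat :=
  match n with
  | 0 => 0 | 1 => 1 | 2 => 2 | 3 => 3 | 4 => 4
  | (S (S (S ((S (S _)) as m)))) => 3 * Mbound m
  end.

Lemma Mbound_add3 m : (2 <= m)%N -> Mbound (m + 3) = 3 * Mbound m.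
Proof. by case: m => [|[|m]] // _; rewrite !addnS addn0. Qed.

Section MboundSuper.

Variable op : nat -> nat -> nat.
Hypothesis opC : commutative op.
Hypothesis op_mul3l : forall x y, (op (3 * x) y <= 3 * op x y)%N.
Hypothesis op_Mbound_small : forall a b, (0 < a < 5)%N -> (0 < b < 5)%N ->
  (op (Mbound a) (Mbound b) <= Mbound (a + b))%N.

Lemma op_Mbound_le a b : (0 < a)%N -> (0 < b)%N ->
  (op (Mbound a) (Mbound b) <= Mbound (a + b))%N.
Proof.
move: {2}(a + b) (leqnn (a + b)) => n; elim: n a b => [|n IH] a b; first lia.
move=> le_ab_n a_gt0 b_gt0.
wlog le_ba : a b le_ab_n a_gt0 b_gt0 / (b <= a)%N.
  move=> hwlog; case: (leqP b a) => [|/ltnW le_ab]; first exact: hwlog.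
  by rewrite opC [a + b]addnC; apply: hwlog; rewrite // addnC.
case: (leqP 5 a) => [a_ge5|a_lt5]; last first.
  by apply: op_Mbound_small; rewrite ?a_gt0 ?b_gt0 //; lia.
have -> : a = (a - 3) + 3 by lia.
have -> : a - 3 + 3 + b = (a - 3 + b) + 3 by lia.
rewrite !Mbound_add3; try lia.
apply: leq_trans (op_mul3l _ _) _.
by rewrite leq_mul2l IH //; lia.
Qed.

End MboundSuper.

Lemma Mbound_addn a b : (0 < a)%N -> (0 < b)%N ->
  (Mbound a + Mbound b <= Mbound (a + b))%N.
Proof.
apply: (op_Mbound_le addnC) => [x y|]; first lia.
by do 2![case=> [|[|[|[|[|]]]]] //].
Qed.

Lemma Mbound_muln a b : (0 < a)%N -> (0 < b)%N ->
  (Mbound a * Mbound b <= Mbound (a + b))%N.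
Proof.
apply: (op_Mbound_le mulnC) => [x y|]; first by rewrite mulnA.
by do 2![case=> [|[|[|[|[|]]]]] //].
Qed.

Fixpoint nleaves q p (f : ltree q p) : nat :=
  match f with Leaf _ => 1 | Node _ l r => nleaves l + nleaves r end.

Lemma nleaves_gt0 q p (f : ltree q p) : (0 < nleaves f)%N.
Proof. by elim: f => //= _ l IHl r IHr; rewrite addn_gt0 IHl. Qed.

Lemma nnodes_nleaves q p (f : ltree q p) : nnodes f = (nleaves f).*2.-1.
Proof.
elim: f => //= _ l -> r ->.
by move: (nleaves_gt0 l) (nleaves_gt0 r); lia.
Qed.

Lemma Mf_le_Mbound q p (f : ltree q p) : (Mf f <= Mbound (nleaves f))%N.
Proof.
elim: f => //= -[] l IHl r IHr.
- apply: leq_trans (Mbound_addn (nleaves_gt0 l) (nleaves_gt0 r)).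
  exact: leq_add.
- apply: leq_trans (Mbound_muln (nleaves_gt0 l) (nleaves_gt0 r)).
  exact: leq_mul.
Qed.

Lemma Mbound_lt_expr n : (0 < n)%N ->
  ((Mbound n)%:R < (145%:R / 100%:R : rat) ^+ n)%R.
Proof.
elim/ltn_ind: n => n IH n_gt0.
case: (leqP 5 n) => [n_ge5|n_lt5]; last first.
  case: n n_gt0 n_lt5 {IH} => [|[|[|[|[|n]]]]] n_gt0 n_lt5; try lia;
    by rewrite [Mbound _]/= !exprS expr0; lra.
have -> : n = (n - 3) + 3 by lia.
rewrite Mbound_add3 ?natrM ?exprD; last lia.
have three_lt : (3%:R < (145%:R / 100%:R : rat) ^+ 3)%R.
  by rewrite !exprS expr0; lra.
rewrite mulrC; apply: ltr_pM (ler0n _ _) (ler0n _ _) _ three_lt.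
by apply: IH; lia.
Qed.

Theorem lemma3 (p q : nat) (hp : (1 <= p)%N) (hq : (1 <= q)%N) (k : nat) :
  forall f : ltree q p, (nnodes f <= 2 * k + 1)%N ->
    ((Mf f)%:R < (145%:R / 100%:R : rat) ^+ k.+1)%R.
Proof.
move=> f f_small.
have leaves_le : (nleaves f <= k.+1)%N.
  by move: f_small; rewrite nnodes_nleaves; lia.
have one_lt : (1 < (145%:R / 100%:R : rat))%R by lra.
apply: (@le_lt_trans _ _ (Mbound (nleaves f))%:R%R).
  by rewrite ler_nat Mf_le_Mbound.
apply: lt_le_trans (Mbound_lt_expr (nleaves_gt0 f)) _.
by rewrite (ler_eXn2l one_lt).
Qed.
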